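(* Let $N$ be a finitely generated, semipositive binoid, $\mathfrak n$ an $N_+$-primary ideal of $N$ and $T$ a finitely generated $N$-set. Suppose there is a constant $C$ with $\operatorname{HKF}(\mathfrak n,N,q)\le Cq^{\dim N}$ for all $q\in\mathbb N_+$. Then there is a constant $\alpha$ with $\operatorname{HKF}(\mathfrak n,T,q)\le\alpha q^{\dim N}$ for all $q\in\mathbb N_+$.
   Context: A binoid $(N,+,0,\infty)$ is a commutative monoid $(N,+,0)$ with an element $\infty$ satisfying $a+\infty=\infty$ for all $a\in N$. Write $N^\times$ for the group of units of $N$ and $N_+=N\setminus N^\times$. $N$ is finitely generated if it is finitely generated as a monoid; semipositive if $N\neq\{\infty\}$ and $N^\times$ is finite. An ideal of $N$ is a nonempty subset $I\subseteq N$ with $I+N\subseteq I$ (so $\infty\in I$). For an ideal $I$ and $q\in\mathbb N_+$, $[q]I$ denotes the ideal generated by $\{qa: a\in I\}$. An ideal $\mathfrak n$ is $N_+$-primary if $\mathfrak n\subseteq N_+$ and for every $a\in N_+$ there is $k\ge1$ with $ka\in\mathfrak n$. A prime ideal is an ideal $\mathfrak p\neq N$ such that $a+b\in\mathfrak p$ implies $a\in\mathfrak p$ or $b\in\mathfrak p$; the (combinatorial) dimension $\dim N$ is the supremum of the lengths $k$ of chains $\mathfrak p_0\subsetneq\cdots\subsetneq\mathfrak p_k$ of prime ideals. An $N$-set is a pointed set $(S,p)$ with a map $N\times S\to S$, $(n,s)\mapsto n+s$, such that $(n+m)+s=n+(m+s)$, $0+s=s$, $\infty+s=p$ and $n+p=p$.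 It is finitely generated if there are $s_1,\dots,s_r\in S$ with $S=\bigcup_j (N+s_j)$. $N$ itself is an $N$-set with distinguished point $\infty$. For an ideal $J$ and an $N$-set $T$, $J+T=\{a+t:a\in J,t\in T\}$ is an $N$-subset; for an $N$-subset $S\subseteq T$ (a subset containing $p$ and stable under the action), the quotient $T/S$ is the $N$-set $(T\setminus S)\cup\{p\}$. For a finite pointed set $S$ we write $\#S=|S|-1$. For $N$ finitely generated and semipositive, $T$ a finitely generated $N$-set, $\mathfrak n$ an $N_+$-primary ideal and $q\in\mathbb N_+$, the Hilbert–Kunz function is $\operatorname{HKF}(\mathfrak n,T,q)=\#\,T/([q]\mathfrak n+T)$. *)

From Stdlib Require Import Reals List Arith.
Import ListNotations.

Record binoid := Binoid {
  bcar :> Type;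
  badd : bcar -> bcar -> bcar;
  bzero : bcar;
  binf : bcar;
  badd_assoc : forall a b c, badd a (badd b c) = badd (badd a b) c;
  badd_comm : forall a b, badd a b = badd b a;
  badd_zero : forall a, badd a bzero = a;
  badd_inf : forall a, badd a binf = binf
}.

Section BinoidDefs.
Variable N : binoid.

Inductive mon_gen (gs : list N) : N -> Prop :=
| mon_gen0 : mon_gen gs (bzero N)
| mon_genS : forall g x, In g gs -> mon_gen gs x -> mon_gen gs (badd N g x).

Definition fin_generated : Prop :=
  exists gs : list N, forall x : N, mon_gen gs x.

Definition is_unit (a : N) : Prop := exists b : N, badd N a b = bzero N.

Definition Nplus (a : N) : Prop := ~ is_unit a.

Definition semipositive : Prop :=
  (exists a : N, a <> binf N) /\
  (exists us : list N, forall a : N, is_unit a -> In a us).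

Fixpoint nsmul (q : nat) (a : N) : N :=
  match q with
  | O => bzero N
  | S q' => badd N a (nsmul q' a)
  end.

Definition is_ideal (I : N -> Prop) : Prop :=
  (exists a, I a) /\ (forall a n, I a -> I (badd N a n)).

Definition frob_ideal (q : nat) (I : N -> Prop) : N -> Prop :=
  fun b => exists a n, I a /\ b = badd N (nsmul q a) n.

Definition Nplus_primary (I : N -> Prop) : Prop :=
  is_ideal I /\ (forall a, I a -> Nplus a) /\
  (forall a, Nplus a -> exists k, 1 <= k /\ I (nsmul k a)).

Definition is_prime (P : N -> Prop) : Prop :=
  is_ideal P /\ (exists a, ~ P a) /\
  (forall a b, P (badd N a b) -> P a \/ P b).

Definition strict_subset (P Q : N -> Prop) : Prop :=
  (forall a, P a -> Q a) /\ (exists a, Q a /\ ~ P a).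

Definition prime_chain (k : nat) : Prop :=
  exists p : nat -> N -> Prop,
    (forall i, i <= k -> is_prime (p i)) /\
    (forall i, i < k -> strict_subset (p i) (p (S i))).

Definition is_dim (d : nat) : Prop :=
  prime_chain d /\ (forall k, prime_chain k -> k <= d).

End BinoidDefs.

Record NSet (N : binoid) := MkNSet {
  scar :> Type;
  sact : N -> scar -> scar;
  spt : scar;
  sact_add : forall n m s, sact (badd N n m) s = sact n (sact m s);
  sact_zero : forall s, sact (bzero N) s = s;
  sact_inf : forall s, sact (binf N) s = spt;
  sact_pt : forall n, sact n spt = spt
}.
Arguments sact {N} _ _ _.
Arguments spt {N} _.

Definition NSet_fg {N : binoid} (T : NSet N) : Prop :=
  exists ss : list T, forall t : T, exists n s, In s ss /\ t = sact T n s.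

Lemma reg_add (N : binoid) : forall n m s : N,
  badd N (badd N n m) s = badd N n (badd N m s).
Proof. intros; symmetry; apply badd_assoc. Qed.
Lemma reg_zero (N : binoid) : forall s : N, badd N (bzero N) s = s.
Proof. intros; rewrite badd_comm; apply badd_zero. Qed.
Lemma reg_inf (N : binoid) : forall s : N, badd N (binf N) s = binf N.
Proof. intros; rewrite badd_comm; apply badd_inf. Qed.
Definition regNSet (N : binoid) : NSet N :=
  MkNSet N (bcar N) (badd N) (binf N) (reg_add N) (reg_zero N) (reg_inf N)
    (badd_inf N).

Definition ideal_plus {N : binoid} (J : N -> Prop) (T : NSet N) : T -> Prop :=
  fun t => exists a s, J a /\ t = sact T a s.

Definition card_is {X : Type} (P : X -> Prop) (k : nat) : Prop :=
  exists l : list X, NoDup l /\ (forall x, P x <-> In x l) /\ length l = k.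

(* HKF(n,T,q) = k, i.e. #(T/([q]n + T)) = k.  Since oo is in [q]n, the
   distinguished point lies in [q]n + T, so T/([q]n+T) minus its point is
   exactly the complement of [q]n + T in T. *)
Definition HKF_is {N : binoid} (n : N -> Prop) (T : NSet N) (q k : nat) : Prop :=
  card_is (fun t : T => ~ ideal_plus (frob_ideal N q n) T t) k.

From Stdlib Require Import Reals List Lia Classical.
Import ListNotations.
Open Scope R_scope.

(* If s_1, ..., s_r generate T, every t outside [q]n + T has the form a + s_j
   with a outside [q]n, because a |-> a + s_j maps [q]n into [q]n + T.  Hence
   HKF(n, T, q) <= r * HKF(n, N, q), and the bound on HKF(n, N, q) transfers
   with alpha = r * C. *)

Lemma card_is_le_of_incl {X : Type} (L : list X) (P : X -> Prop) :
  (forall x, P x -> In x L) -> exists k, card_is P k /\ (k <= length L)%nat.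
Proof.
  revert P; induction L as [|y L IH]; intros P HP.
  - exists 0%nat; split; [|simpl; lia].
    exists []; repeat split; [constructor| |intros []].
    intros Px; exact (HP x Px).
  - destruct (IH (fun x => P x /\ x <> y)) as [k [[l [nd [Hl Hk]]] HkL]].
    { intros x [Px Hxy]; destruct (HP x Px) as [->|]; [congruence|assumption]. }
    destruct (classic (P y)) as [Py|nPy].
    + exists (S k); split; [|simpl; lia].
      exists (y :: l); split; [|split; [|simpl; congruence]].
      * constructor; [|exact nd]. intros Hin; apply Hl in Hin; tauto.
      * intros x; split.
        -- intros Px; destruct (classic (x = y)) as [->|ne]; [now left|].
           right; apply Hl; tauto.
        -- intros [<-|Hin]; [exact Py|apply Hl in Hin; tauto].
    + exists k; split; [|simpl; lia].
      exists l; split; [exact nd|split; [|exact Hk]].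
      intros x; split.
      * intros Px; apply Hl; split; [exact Px|]. intros ->; tauto.
      * intros Hin; apply Hl in Hin; tauto.
Qed.

Lemma ideal_plus_act {N : binoid} (J : N -> Prop) (T : NSet N) (a : N) (s : T) :
  ideal_plus J (regNSet N) a -> ideal_plus J T (sact T a s).
Proof.
  intros [b [c [Jb ->]]]; exists b, (sact T c s); split; [exact Jb|].
  apply sact_add.
Qed.

Lemma card_compl_ideal_plus_le {N : binoid} (J : N -> Prop) (T : NSet N)
    (ss : list T) (kN : nat) :
  (forall t : T, exists a s, In s ss /\ t = sact T a s) ->
  card_is (fun a : N => ~ ideal_plus J (regNSet N) a) kN ->
  exists k, card_is (fun t : T => ~ ideal_plus J T t) k /\
            (k <= length ss * kN)%nat.
Proof.
  intros Hss [lN [_ [HlN HkN]]].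
  set (L := flat_map (fun s => map (fun a => sact T a s) lN) ss).
  assert (HL : length L = (length ss * kN)%nat).
  { subst kN; apply flat_map_constant_length; intros s _; apply length_map. }
  rewrite <- HL; apply card_is_le_of_incl.
  intros t Ht; destruct (Hss t) as [a [s [Hs ->]]].
  apply in_flat_map; exists s; split; [exact Hs|].
  apply (in_map (fun b => sact T b s)), HlN; intros HJa.
  exact (Ht (ideal_plus_act J T a s HJa)).
Qed.

Lemma HKF_le_mul_gens {N : binoid} (n : N -> Prop) (T : NSet N) (ss : list T)
    (q kN : nat) :
  (forall t : T, exists a s, In s ss /\ t = sact T a s) ->
  HKF_is n (regNSet N) q kN ->
  exists k, HKF_is n T q k /\ (k <= length ss * kN)%nat.
Proof. apply card_compl_ideal_plus_le. Qed.

Theorem mainTheorem12 (N : binoid) (n : N -> Prop) (T : NSet N) (d : nat) :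
  fin_generated N -> semipositive N -> Nplus_primary N n -> NSet_fg T ->
  is_dim N d ->
  (exists C : R, forall q : nat, (1 <= q)%nat ->
     exists k : nat, HKF_is n (regNSet N) q k /\ INR k <= C * INR q ^ d) ->
  exists alpha : R, forall q : nat, (1 <= q)%nat ->
     exists k : nat, HKF_is n T q k /\ INR k <= alpha * INR q ^ d.
Proof.
  intros _ _ _ [ss Hss] _ [C HC].
  exists (INR (length ss) * C); intros q hq.
  destruct (HC q hq) as [kN [HkN HkNC]].
  destruct (HKF_le_mul_gens n T ss q kN Hss HkN) as [k [Hk Hkle]].
  exists k; split; [exact Hk|].
  apply le_INR in Hkle; rewrite mult_INR in Hkle.
  rewrite Rmult_assoc; eapply Rle_trans; [exact Hkle|].
  apply Rmult_le_compat_l; [apply pos_INR|exact HkNC].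
Qed.
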